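(* Let $\Delta=\{|\zeta|\le1\}$, $\Gamma=\{|\zeta|=1\}$. Let $\varphi$ be a continuous complex-valued function on $\Delta\setminus\{0\}$ which is holomorphic on $\{0<|\zeta|<1\}$ and has either a pole or a removable singularity at $\zeta=0$. Let $\gamma=\{(\zeta,\varphi(\zeta)):\zeta\in\Gamma\}\subset\mathbb{C}^2$ and $\Sigma=\{(\zeta,\varphi(\zeta)):\zeta\in\Delta\setminus\{0\}\}\subset\mathbb{C}^2$. Then $\Sigma\subset\widehat{\gamma}$, where $\widehat\gamma$ is the projective hull of $\gamma$.
   Context: For a compact set $X\subset\mathbb{C}^n$, let $\mathcal{P}_d$ denote the space of complex polynomials on $\mathbb{C}^n$ of degree at most $d$. The projective hull $\widehat X$ of $X$ is the set of points $x\in\mathbb{C}^n$ for which there exists a constant $C_x$ such that $|P(x)|\le (C_x)^d\sup_X|P|$ for all $P\in\mathcal{P}_d$ and all $d\ge0$. *)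

From HB Require Import structures.
From mathcomp Require Import all_boot all_order all_algebra.
From mathcomp Require Import complex.
From mathcomp Require Import all_classical all_reals all_analysis.
Set Implicit Arguments. Unset Strict Implicit. Unset Printing Implicit Defensive.
Import Order.TTheory GRing.Theory Num.Theory ComplexField.
Import numFieldNormedType.Exports.
Local Open Scope classical_set_scope.
Local Open Scope ring_scope.
Local Open Scope complex_scope.

(* Evaluation of a polynomial on C^2 of degree at most d, given by its
   coefficients c i j (coefficient of x^i y^j, i + j <= d). Every element of
   P_d is of this form for some c. *)
Definition poly2_eval (R : realType) (d : nat) (c : nat -> nat -> R[i])
  (p : R[i] * R[i]) : R[i] :=
  \sum_(i < d.+1) \sum_(j < d.+1 | (i + j <= d)%N) c i j * p.1 ^+ i * p.2 ^+ j.

(* Projective hull of X in C^2: points x for which there is C_x with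
   |P(x)| <= C_x^d sup_X |P| for all P in P_d and all d.  "sup_X |P|" is
   expressed by quantifying over all upper bounds M of |P| on X. *)
Definition projective_hull (R : realType) (X : set (R[i] * R[i])) :
  set (R[i] * R[i]) :=
  [set x | exists C : R, forall (d : nat) (c : nat -> nat -> R[i]) (M : R),
      (forall y, X y -> `|poly2_eval d c y| <= M%:C) ->
      `|poly2_eval d c x| <= (C ^+ d * M)%:C].

Definition holomorphic_on (R : realType) (A : set R[i]) (f : R[i] -> R[i]) :=
  forall z, A z -> derivable (f : R[i]^o -> R[i]^o) (z : R[i]^o) 1.

(* f (defined near 0, off 0) has a pole or a removable singularity at 0:
   z^m f(z) extends holomorphically across 0 for some m. *)
Definition pole_or_removable_at0 (R : realType) (f : R[i] -> R[i]) :=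
  exists (m : nat) (g : R[i] -> R[i]),
    holomorphic_on [set z | `|z| < 1] g /\
    forall z, 0 < `|z| < 1 -> f z = g z / z ^+ m.

Definition continuous_on (R : realType) (A : set R[i]) (f : R[i] -> R[i]) :=
  {within (A : set R[i]^o), continuous (f : R[i]^o -> R[i]^o)}.

From HB Require Import structures.
From mathcomp Require Import all_boot all_order all_algebra.
From mathcomp Require Import complex.
From mathcomp Require Import all_classical all_reals all_analysis.
From mathcomp Require Import ring lra.
Set Implicit Arguments. Unset Strict Implicit. Unset Printing Implicit Defensive.
Import Order.TTheory GRing.Theory Num.Theory ComplexField.
Import numFieldNormedType.Exports.
Local Open Scope classical_set_scope.
Local Open Scope ring_scope.
Local Open Scope complex_scope.

(* For a polynomial P of degree d, the function z^(m d) P(z, phi z), with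
   phi = g / z^m, extends holomorphically across 0 and is continuous up to the
   unit circle, where its modulus is |P| <= sup_gamma |P|.  The maximum modulus
   principle then gives |P(z, phi z)| <= (|z|^-m)^d sup_gamma |P| for
   0 < |z| < 1, so C = |z|^-m works (and C = 1 on the circle itself).

   The maximum modulus principle is derived from a discrete mean value
   property.  Goursat's quadrisection argument, applied to trapezoid sums of
   h(z)/z dz around polar rectangles, shows that the averages of a holomorphic
   h over the 2^n-th roots of unity scaled to two radii nearly agree for large
   n.  Shrinking the inner radius gives |h 0| <= max_{|z| = 1} |h|, and Möbius
   automorphisms of the disc move 0 to any point. *)

Section Modulus.
Variable R : realType.
Local Notation C := R[i].

Definition cmod (z : C) : R := Normc.normc z.

Lemma cmod_ge0 z : 0 <= cmod z.
Proof. by case: z => a b; rewrite /cmod /= sqrtr_ge0. Qed.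

Lemma cmodD x y : cmod (x + y) <= cmod x + cmod y.
Proof. exact: le_normcD. Qed.

Lemma cmodM x y : cmod (x * y) = cmod x * cmod y.
Proof. exact: Normc.normcM. Qed.

Lemma cmodV x : cmod x^-1 = (cmod x)^-1.
Proof. exact: Normc.normcV. Qed.

Lemma cmodN x : cmod (- x) = cmod x.
Proof. exact: normcN. Qed.

Lemma cmod0 : cmod 0 = 0.
Proof. exact: Normc.normc0. Qed.

Lemma cmod1 : cmod 1 = 1.
Proof. exact: Normc.normc1. Qed.

Lemma cmod_eq0 x : (cmod x == 0) = (x == 0).
Proof. by apply/eqP/eqP => [/Normc.eq0_normc//|->]; rewrite cmod0. Qed.

Lemma cmod_gt0 x : x != 0 -> 0 < cmod x.
Proof. by move=> x0; rewrite lt_def cmod_eq0 x0 cmod_ge0. Qed.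

Lemma cmod_distC x y : cmod (x - y) = cmod (y - x).
Proof. by rewrite -cmodN opprB. Qed.

Lemma cmod_distD x y z : cmod (x - z) <= cmod (x - y) + cmod (y - z).
Proof. by have := cmodD (x - y) (y - z); rewrite addrA subrK. Qed.

Lemma cmod_lerB_dist x y : cmod x - cmod y <= cmod (x - y).
Proof. by rewrite lerBlDr; have := cmodD (x - y) y; rewrite subrK. Qed.

Lemma cmodX z n : cmod (z ^+ n) = cmod z ^+ n.
Proof. by elim: n => [|n IH]; rewrite ?expr0 ?cmod1 // !exprS cmodM IH. Qed.

Lemma cmodR (r : R) : cmod r%:C = `|r|.
Proof. by rewrite /cmod /= expr0n /= addr0 sqrtr_sqr. Qed.

Lemma cmod_natr (k : nat) : cmod k%:R = k%:R.
Proof. by rewrite -(rmorph_nat (real_complex R)) cmodR normr_nat. Qed.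

Lemma cmod_conj z : cmod z^* = cmod z.
Proof. by case: z => a b; rewrite /cmod /= sqrrN. Qed.

Lemma sqr_cmod z : cmod z ^+ 2 = complex.Re z ^+ 2 + complex.Im z ^+ 2.
Proof. by case: z => a b; rewrite /cmod /= sqr_sqrtr // addr_ge0 ?sqr_ge0. Qed.

Lemma cmod_le_ReIm z : cmod z <= `|complex.Re z| + `|complex.Im z|.
Proof.
case: z => a b; rewrite /cmod /=.
have h : 0 <= `|a| + `|b| by rewrite addr_ge0.
rewrite -(ger0_norm h) -sqrtr_sqr ler_sqrt ?sqr_ge0 //.
have hab : 0 <= `|a| * `|b| by rewrite mulr_ge0.
rewrite sqrrD !real_normK ?num_real //; lra.
Qed.

Lemma cmod_sum (k : nat) (f : nat -> C) :
  cmod (\sum_(j < k) f j) <= \sum_(j < k) cmod (f j).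
Proof.
elim: k => [|k IH]; first by rewrite !big_ord0 cmod0.
by rewrite !big_ord_recr /= (le_trans (cmodD _ _)) ?lerD.
Qed.

Lemma normcE z : `|z| = (cmod z)%:C.
Proof. by case: z. Qed.

Lemma normc_ltR z (r : R) : (`|z| < r%:C) = (cmod z < r).
Proof. by rewrite normcE ltcR. Qed.

Lemma normc_leR z (r : R) : (`|z| <= r%:C) = (cmod z <= r).
Proof. by rewrite normcE lecR. Qed.

Lemma normc_gtR z (r : R) : (r%:C < `|z|) = (r < cmod z).
Proof. by rewrite normcE ltcR. Qed.

Lemma normc_gt0 z : (0 < `|z|) = (0 < cmod z).
Proof. exact: normc_gtR. Qed.

Lemma normc_lt1 z : (`|z| < 1) = (cmod z < 1).
Proof. exact: normc_ltR. Qed.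

Lemma normc_le1 z : (`|z| <= 1) = (cmod z <= 1).
Proof. exact: normc_leR. Qed.

Lemma normc_eq1 z : `|z| = 1 <-> cmod z = 1.
Proof. by rewrite normcE; split => [[]//|->]. Qed.

End Modulus.

Section Exponential.
Variable R : realType.
Local Notation C := R[i].
Local Notation cmod := (@cmod R).

Definition expi (t : R) : C := Complex (cos t) (sin t).

Lemma cmod_expi t : cmod (expi t) = 1.
Proof. by rewrite /cmod /expi /= cos2Dsin2 sqrtr1. Qed.

Lemma expi_neq0 t : expi t != 0.
Proof. by rewrite -cmod_eq0 cmod_expi oner_eq0. Qed.

Lemma expiD a b : expi (a + b) = expi a * expi b.
Proof. by rewrite /expi /= cosD sinD; congr Complex; ring. Qed.

Lemma expi0 : expi 0 = 1.
Proof. by rewrite /expi cos0 sin0. Qed.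

Lemma expiN t : expi (- t) = (expi t)^-1.
Proof.
by apply: (mulfI (expi_neq0 t)); rewrite -expiD addrN expi0 divff // expi_neq0.
Qed.

Lemma expi2pi : expi (pi *+ 2) = 1.
Proof. by rewrite /expi cos2pi sin2pi. Qed.

Lemma dist_sin_le (a b : R) : `|sin a - sin b| <= `|a - b|.
Proof.
wlog ab : a b / a <= b.
  by move=> W; case: (leP a b) => [/W//|/ltW/W]; rewrite distrC [`|b - a|]distrC.
have [c _ E] := MVT_segment ab (fun x _ => is_derive_sin x)
  (continuous_subspaceT (@continuous_sin R)).
by rewrite distrC E normrM distrC ler_piMl // cos_max.
Qed.

Lemma dist_cos_le (a b : R) : `|cos a - cos b| <= `|a - b|.
Proof.
wlog ab : a b / a <= b.
  by move=> W; case: (leP a b) => [/W//|/ltW/W]; rewrite distrC [`|b - a|]distrC.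
have [c _ E] := MVT_segment ab (fun x _ => is_derive_cos x)
  (continuous_subspaceT (@continuous_cos R)).
by rewrite distrC E normrM normrN distrC ler_piMl // sin_max.
Qed.

Lemma cmod_expiB (a b : R) : cmod (expi a - expi b) <= 2 * `|a - b|.
Proof.
apply: le_trans (cmod_le_ReIm _) _.
by rewrite mulr2n mulrDl mul1r lerD ?dist_cos_le ?dist_sin_le.
Qed.

Lemma sin_ge_cos1 (x : R) : 0 < x <= 1 -> x * cos 1 <= sin x.
Proof.
move=> /andP[x0 x1].
have [c] := MVT_segment (ltW x0) (fun y _ => is_derive_sin y)
  (continuous_subspaceT (@continuous_sin R)).
rewrite in_itv /= => /andP[c0 cx]; rewrite sin0 !subr0 => ->.
rewrite mulrC ler_pM2r //.
have pi1 : 1 <= (pi : R) by have := @pi_ge2 R; lra.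
have [c1|c1] := ltP c 1; last by have -> : c = 1 by lra.
have m1 : (1 : R) \in `[0, pi] by rewrite in_itv /= ler01 pi1.
have mc : c \in `[0, pi] by rewrite in_itv /= c0 /=; lra.
by rewrite ltW // (ltr_cos mc m1).
Qed.

Lemma cmod_expiBV (x : R) : 0 < x <= 1 -> 2 * x * cos 1 <= cmod (expi x - (expi x)^-1).
Proof.
move=> hx; rewrite -expiN /expi cosN sinN /cmod /=.
rewrite subrr expr0n /= add0r opprK sqrtr_sqr.
have := sin_ge_cos1 hx; have := ler_norm (sin x + sin x); lra.
Qed.

End Exponential.

Section ContinuityWithin.
Variable R : realType.
Local Notation C := R[i].
Local Notation cmod := (@cmod R).

Definition cont_within (A : C -> Prop) (f : C -> C) (p : C) :=
  forall e : R, 0 < e -> exists d : R, 0 < d /\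
    forall z, A z -> cmod (z - p) < d -> cmod (f z - f p) < e.

Lemma cont_within_cst A (c : C) p : cont_within A (fun _ => c) p.
Proof. by move=> e e0; exists 1; split => // z _ _; rewrite subrr cmod0. Qed.

Lemma cont_within_id A p : cont_within A id p.
Proof. by move=> e e0; exists e. Qed.

Lemma cont_within_subset A B f p : (forall z, B z -> A z) ->
  cont_within A f p -> cont_within B f p.
Proof.
move=> BA hf e /hf[d [d0 H]]; exists d; split => // z Bz.
exact/H/BA.
Qed.

Lemma cont_within_eq_near A f g p :
  (exists2 r : R, 0 < r & forall z, cmod (z - p) < r -> f z = g z) ->
  cont_within A f p -> cont_within A g p.
Proof.
move=> [r r0 E] hf e /hf[d [d0 H]].
exists (Num.min d r); split; first by rewrite lt_min d0 r0.
move=> z Az; rewrite lt_min => /andP[zd zr].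
by rewrite -E // -E ?subrr ?cmod0 // H.
Qed.

Lemma cont_withinD A f g p : cont_within A f p -> cont_within A g p ->
  cont_within A (fun z => f z + g z) p.
Proof.
move=> hf hg e e0; have e20 : 0 < e / 2 by rewrite divr_gt0.
have [d1 [d10 H1]] := hf _ e20; have [d2 [d20 H2]] := hg _ e20.
exists (Num.min d1 d2); split; first by rewrite lt_min d10 d20.
move=> z Az; rewrite lt_min => /andP[z1 z2].
have -> : f z + g z - (f p + g p) = (f z - f p) + (g z - g p) by ring.
have := cmodD (f z - f p) (g z - g p); have := H1 z Az z1; have := H2 z Az z2; lra.
Qed.

Lemma cont_withinN A f p : cont_within A f p -> cont_within A (fun z => - f z) p.
Proof.
move=> hf e /hf[d [d0 H]]; exists d; split => // z Az zd.
by rewrite -opprD cmodN H.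
Qed.

Lemma cont_withinM A f g p : cont_within A f p -> cont_within A g p ->
  cont_within A (fun z => f z * g z) p.
Proof.
move=> hf hg e e0.
set F := cmod (f p); set G := cmod (g p); set K := F + G + 1.
have F0 : 0 <= F := cmod_ge0 _. have G0 : 0 <= G := cmod_ge0 _.
have K0 : 0 < K by rewrite /K; lra.
set eta := Num.min 1 (e / K).
have eta0 : 0 < eta by rewrite lt_min ltr01 divr_gt0.
have eta1 : eta <= 1 by rewrite ge_min lexx.
have etaK : eta * K <= e by rewrite -ler_pdivlMr // ge_min lexx orbT.
have [d1 [d10 H1]] := hf _ eta0; have [d2 [d20 H2]] := hg _ eta0.
exists (Num.min d1 d2); split; first by rewrite lt_min d10 d20.
move=> z Az; rewrite lt_min => /andP[z1 z2].
have -> : f z * g z - f p * g p =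
   (f z - f p) * (g z - g p) + f p * (g z - g p) + g p * (f z - f p) by ring.
have a1 := H1 z Az z1; have b1 := H2 z Az z2.
have a0 := cmod_ge0 (f z - f p); have b0 := cmod_ge0 (g z - g p).
have t1 := cmodD ((f z - f p) * (g z - g p) + f p * (g z - g p)) (g p * (f z - f p)).
have t2 := cmodD ((f z - f p) * (g z - g p)) (f p * (g z - g p)).
rewrite !cmodM -/F -/G in t1 t2.
rewrite /K in etaK; nra.
Qed.

Lemma cont_withinV A p : p != 0 -> cont_within A (fun z => z^-1) p.
Proof.
move=> p0 e e0; have np := cmod_gt0 p0; set P := cmod p in np *.
exists (Num.min (P / 2) (e * P ^+ 2 / 2)); split.
  by rewrite lt_min !divr_gt0 // mulr_gt0 // exprn_gt0.
move=> z _; rewrite lt_min => /andP[z1 z2].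
have zP : P / 2 < cmod z by have := cmod_lerB_dist p z; rewrite -/P cmod_distC; lra.
have z0 : z != 0 by rewrite -cmod_eq0; apply/eqP => z0; rewrite z0 in zP; lra.
have -> : z^-1 - p^-1 = (p - z) * (z * p)^-1 by field; rewrite z0 p0.
rewrite cmodM cmodV cmodM cmod_distC -/P.
have nz0 : 0 < cmod z * P by rewrite mulr_gt0 //; lra.
rewrite ltr_pdivrMr //.
have h3 : e * (P * (P / 2)) < e * (cmod z * P).
  by rewrite ltr_pM2l // [cmod z * P]mulrC ltr_pM2l.
rewrite (_ : e * P ^+ 2 / 2 = e * (P * (P / 2))) in z2; last by ring.
lra.
Qed.

Lemma cont_within_comp A B f g p : cont_within B f (g p) -> cont_within A g p ->
  (forall z, A z -> B (g z)) -> cont_within A (fun z => f (g z)) p.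
Proof.
move=> hf hg AB e /hf[d1 [d10 H1]].
have [d2 [d20 H2]] := hg d1 d10; exists d2; split => // z Az zd.
by apply: H1; [exact: AB | exact: H2].
Qed.

Lemma cont_within_sum A (k : nat) (F : nat -> C -> C) p :
  (forall i, cont_within A (F i) p) -> cont_within A (fun z => \sum_(i < k) F i z) p.
Proof.
move=> hF; elim: k => [|k IH].
  by under eq_fun do rewrite big_ord0; exact: cont_within_cst.
by under eq_fun do rewrite big_ord_recr; exact: cont_withinD.
Qed.

Lemma cont_withinX A f p n : cont_within A f p -> cont_within A (fun z => f z ^+ n) p.
Proof.
move=> hf; elim: n => [|n IH].
  by under eq_fun do rewrite expr0; exact: cont_within_cst.
by under eq_fun do rewrite exprSr; exact: cont_withinM.
Qed.

End ContinuityWithin.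

Section CaratheodoryDerivative.
Variable R : realType.
Local Notation C := R[i].
Local Notation cmod := (@cmod R).

(* Carathéodory's formulation of complex differentiability at [p]. *)
Definition cdiff (u : C -> C) (p : C) :=
  exists D : C -> C, (forall z, u z - u p = D z * (z - p)) /\ cont_within setT D p.

Lemma cdiff_cont A u p : cdiff u p -> cont_within A u p.
Proof.
move=> [D [E hD]]; apply: (cont_within_subset (A := setT)) => //.
have h : cont_within setT (fun z => u p + D z * (z - p)) p.
  apply/cont_withinD/cont_withinM => //; first exact: cont_within_cst.
  by apply: cont_withinD; [exact: cont_within_id|exact: cont_within_cst].
by move: h; under eq_fun do rewrite -E subrKC.
Qed.

Lemma cdiff_cst (c : C) p : cdiff (fun _ => c) p.
Proof.
exists (fun _ => 0); split; last exact: cont_within_cst.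
by move=> z; rewrite subrr mul0r.
Qed.

Lemma cdiff_id p : cdiff id p.
Proof.
exists (fun _ => 1); split; last exact: cont_within_cst.
by move=> z; rewrite mul1r.
Qed.

Lemma cdiffD u v p : cdiff u p -> cdiff v p -> cdiff (fun z => u z + v z) p.
Proof.
move=> [D1 [E1 h1]] [D2 [E2 h2]]; exists (fun z => D1 z + D2 z); split.
  by move=> z; rewrite mulrDl -E1 -E2; ring.
exact: cont_withinD.
Qed.

Lemma cdiffM u v p : cdiff u p -> cdiff v p -> cdiff (fun z => u z * v z) p.
Proof.
move=> hu hv; have cu : cont_within setT u p := cdiff_cont setT hu.
move: hu hv => [D1 [E1 h1]] [D2 [E2 h2]].
exists (fun z => u z * D2 z + v p * D1 z); split.
  move=> z; rewrite -[u z](subrK (u p)) -[v z](subrK (v p)) E1 E2; ring.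
by apply: cont_withinD; apply: cont_withinM => //; exact: cont_within_cst.
Qed.

Lemma cdiff_comp u v p : cdiff u (v p) -> cdiff v p -> cdiff (fun z => u (v z)) p.
Proof.
move=> hu hv; have cv : cont_within setT v p := cdiff_cont setT hv.
move: hu hv => [D1 [E1 h1]] [D2 [E2 h2]].
exists (fun z => D1 (v z) * D2 z); split; first by move=> z; rewrite E1 E2 mulrA.
by apply: cont_withinM => //; exact: cont_within_comp h1 cv _.
Qed.

Lemma cdiff_eq_near u v p :
  (exists2 r : R, 0 < r & forall z, cmod (z - p) < r -> u z = v z) ->
  cdiff u p -> cdiff v p.
Proof.
move=> [r r0 E] [D [ED hD]].
exists (fun z => if z == p then D p else (v z - v p) / (z - p)); split.
  move=> z; case: eqP => [->|/eqP zp]; first by rewrite !subrr mulr0.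
  by rewrite divfK // subr_eq0.
apply: cont_within_eq_near hD; exists r => // z zr; case: eqP => [->//|/eqP zp].
have up : u p = v p by apply: E; rewrite subrr cmod0.
by rewrite -E // -up ED mulfK // subr_eq0.
Qed.

Lemma cdiffV p : p != 0 -> cdiff (fun z => z^-1) p.
Proof.
move=> p0.
exists (fun z => if z == 0 then p^-2 else - (z * p)^-1); split.
  move=> z; case: eqP => [->|/eqP z0]; first by rewrite invr0 sub0r; field.
  by field; rewrite z0 p0.
apply: (cont_within_eq_near (f := (fun z => - (z * p)^-1))); last first.
  apply/cont_withinN/(cont_within_comp (B := setT) (f := fun w => w^-1) (g := fun z => z * p)) => //.
    by apply: cont_withinV; rewrite mulf_neq0.
  by apply: cont_withinM; [exact: cont_within_id|exact: cont_within_cst].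
exists (cmod p) => [|z zp]; first exact: cmod_gt0.
by case: eqP => // z0; move: zp; rewrite z0 sub0r cmodN ltxx.
Qed.

Lemma cdiff_sum (k : nat) (F : nat -> C -> C) p :
  (forall i, cdiff (F i) p) -> cdiff (fun z => \sum_(i < k) F i z) p.
Proof.
move=> hF; elim: k => [|k IH].
  by under eq_fun do rewrite big_ord0; exact: cdiff_cst.
by under eq_fun do rewrite big_ord_recr; exact: cdiffD.
Qed.

Lemma cdiffX u p n : cdiff u p -> cdiff (fun z => u z ^+ n) p.
Proof.
move=> hu; elim: n => [|n IH].
  by under eq_fun do rewrite expr0; exact: cdiff_cst.
by under eq_fun do rewrite exprSr; exact: cdiffM.
Qed.

End CaratheodoryDerivative.

Section Quadrisection.
Variable R : realType.

Lemma nested_intervals (S T : nat -> R) :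
  (forall n, S n <= S n.+1) -> (forall n, T n.+1 <= T n) -> (forall n, S n <= T n) ->
  exists x, forall n, S n <= x <= T n.
Proof.
move=> /nondecreasing_seqP Sup /nonincreasing_seqP Tdn ST.
have ST' m n : S m <= T n.
  apply: le_trans (Sup _ _ (leq_maxl m n)) _.
  exact: le_trans (ST _) (Tdn _ _ (leq_maxr m n)).
have hS : has_sup (range S) by split; [exists (S 0), 0%N | exists (T 0) => _ [m _ <-]].
exists (sup (range S)) => n; apply/andP; split.
  by apply: sup_upper_bound => //; exists n.
by apply: ge_sup; [exists (S 0), 0%N | move=> _ [m _ <-]].
Qed.

Variable P : R -> R -> R -> R -> Prop.
Hypothesis P_quarter : forall s t a b, s <= t -> a <= b -> P s t a b ->
  let m := (s + t) / 2 in let mu := (a + b) / 2 in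
  P s m a mu \/ P m t a mu \/ P s m mu b \/ P m t mu b.

(* [((s, t), (a, b))] encodes the rectangle [s, t] x [a, b]. *)
Definition quarter (q : (R * R) * (R * R)) : (R * R) * (R * R) :=
  let: ((s, t), (a, b)) := q in
  let m := (s + t) / 2 in let mu := (a + b) / 2 in
  if `[< P s m a mu >] then ((s, m), (a, mu)) else
  if `[< P m t a mu >] then ((m, t), (a, mu)) else
  if `[< P s m mu b >] then ((s, m), (mu, b)) else ((m, t), (mu, b)).

Lemma quarter_spec q : q.1.1 <= q.1.2 -> q.2.1 <= q.2.2 -> P q.1.1 q.1.2 q.2.1 q.2.2 ->
  let q' := quarter q in
  [/\ P q'.1.1 q'.1.2 q'.2.1 q'.2.2, q.1.1 <= q'.1.1 /\ q'.1.2 <= q.1.2,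
      q.2.1 <= q'.2.1 /\ q'.2.2 <= q.2.2,
      q'.1.2 - q'.1.1 = (q.1.2 - q.1.1) / 2 & q'.2.2 - q'.2.1 = (q.2.2 - q.2.1) / 2].
Proof.
case: q => [[s t] [a b]] /= st ab Pq; rewrite /quarter.
case: asboolP => [h|?] /=; first by repeat first [assumption | lra | split].
case: asboolP => [h|?] /=; first by repeat first [assumption | lra | split].
case: asboolP => [h|?] /=; first by repeat first [assumption | lra | split].
by have [//|[//|[//|h]]] := P_quarter st ab Pq; repeat first [assumption | lra | split].
Qed.

Lemma quadrisection s0 t0 a0 b0 : s0 <= t0 -> a0 <= b0 -> P s0 t0 a0 b0 ->
  exists x y, (s0 <= x <= t0) /\ (a0 <= y <= b0) /\
    forall d : R, 0 < d -> exists s t a b, P s t a b /\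
      s0 <= s /\ s <= x /\ x <= t /\ t <= t0 /\
      a0 <= a /\ a <= y /\ y <= b /\ b <= b0 /\ (t - s) + (b - a) < d.
Proof.
move=> st0 ab0 P0.
pose q n := iter n quarter ((s0, t0), (a0, b0)).
pose S n := (q n).1.1; pose T n := (q n).1.2; pose A n := (q n).2.1; pose B n := (q n).2.2.
have quarter_q n : S n <= T n -> A n <= B n -> P (S n) (T n) (A n) (B n) ->
    [/\ P (S n.+1) (T n.+1) (A n.+1) (B n.+1), S n <= S n.+1 /\ T n.+1 <= T n,
      A n <= A n.+1 /\ B n.+1 <= B n,
      T n.+1 - S n.+1 = (T n - S n) / 2 & B n.+1 - A n.+1 = (B n - A n) / 2].
  exact: (@quarter_spec (q n)).
have inv n : [/\ S n <= T n, A n <= B n & P (S n) (T n) (A n) (B n)].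
  elim: n => [//|n [stn abn Pn]].
  by have [Pn' _ _ e1 e2] := quarter_q n stn abn Pn; split => //; lra.
have step n := let: And3 stn abn Pn := inv n in quarter_q n stn abn Pn.
have [x Hx] : exists x, forall n, S n <= x <= T n.
  apply: nested_intervals => n;
    [by have [_ [? ?]] := step n | by have [_ [? ?]] := step n | by have [] := inv n].
have [y Hy] : exists y, forall n, A n <= y <= B n.
  apply: nested_intervals => n;
    [by have [_ _ [? ?]] := step n | by have [_ _ [? ?]] := step n | by have [] := inv n].
have size n : (T n - S n) + (B n - A n) = ((t0 - s0) + (b0 - a0)) / 2 ^+ n.
  elim: n => [|n IH]; first by rewrite expr0 divr1.
  have [_ _ _ -> ->] := step n.
  by rewrite exprSr invfM mulrA -IH; lra.
have Sup : nondecreasing_seq S.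
  by apply/nondecreasing_seqP => n; have [_ [? ?]] := step n.
have Tdn : nonincreasing_seq T.
  by apply/nonincreasing_seqP => n; have [_ [? ?]] := step n.
have Aup : nondecreasing_seq A.
  by apply/nondecreasing_seqP => n; have [_ _ [? ?]] := step n.
have Bdn : nonincreasing_seq B.
  by apply/nonincreasing_seqP => n; have [_ _ [? ?]] := step n.
exists x, y; split; first exact: Hx 0%N.
split; first exact: Hy 0%N.
move=> d d0; set sz := (t0 - s0) + (b0 - a0).
have sz0 : 0 <= sz by rewrite /sz; lra.
have [n hn] : exists n, sz / d < n%:R.
  by exists (Num.bound (sz / d)); apply: archi_boundP; rewrite divr_ge0 // ltW.
have n2 : (n%:R : R) <= 2 ^+ n.
  by rewrite -natrX ler_nat; apply: ltnW; apply: ltn_expl.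
have [_ _ Pn] := inv n.
exists (S n), (T n), (A n), (B n); split => //.
have /andP[? ?] := Hx n; have /andP[? ?] := Hy n.
have := Sup 0%N n isT; have := Tdn 0%N n isT; have := Aup 0%N n isT; have := Bdn 0%N n isT.
move=> *; do 8! split => //.
rewrite size -/sz ltr_pdivrMr ?exprn_gt0 // mulrC.
rewrite ltr_pdivrMr // in hn.
have : n%:R * d <= 2 ^+ n * d by rewrite ler_pM2r.
lra.
Qed.

End Quadrisection.

Section PolarSums.
Variable R : realType.
Local Notation C := R[i].
Local Notation cmod := (@cmod R).

Definition polar (r t : R) : C := r%:C * expi t.
(* [path_sum u f s t k] is twice the trapezoid rule with [k] steps for the
   contour integral of [u] along [f] over [s, t]; [rect_sum] adds it up around
   the boundary of the polar rectangle {polar r th | r in [s, t], th in [a, b]}. *)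
Definition trapz (u : C -> C) (a b : C) := (u a + u b) * (b - a).
Definition grid (s t : R) (k j : nat) : R := s + j%:R * (t - s) / k%:R.
Definition path_sum (u : C -> C) (f : R -> C) (s t : R) (k : nat) :=
  \sum_(j < k) trapz u (f (grid s t k j)) (f (grid s t k j.+1)).
Definition rect_sum (u : C -> C) (k : nat) (s t a b : R) :=
  path_sum u (fun r => polar r a) s t k + path_sum u (fun th => polar t th) a b k
  - path_sum u (fun r => polar r b) s t k - path_sum u (fun th => polar s th) a b k.

Lemma cmod_polar r t : cmod (polar r t) = `|r|.
Proof. by rewrite /polar cmodM cmodR cmod_expi mulr1. Qed.

Lemma polar_distR x y t : cmod (polar x t - polar y t) = `|x - y|.
Proof. by rewrite /polar -mulrBl -rmorphB cmodM cmodR cmod_expi mulr1. Qed.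

Lemma polar_distA r x y : `|r| <= 1 -> cmod (polar r x - polar r y) <= 2 * `|x - y|.
Proof.
move=> r1; rewrite /polar -mulrBr cmodM cmodR.
have h := cmod_expiB x y; have h0 := cmod_ge0 (expi x - expi y).
have h1 : 0 <= `|r| by [].
nra.
Qed.

Lemma polar_dist r r' t t' : `|r'| <= 1 ->
  cmod (polar r t - polar r' t') <= `|r - r'| + 2 * `|t - t'|.
Proof.
move=> r1; have := cmod_distD (polar r t) (polar r' t) (polar r' t').
rewrite polar_distR; have := polar_distA t t' r1; lra.
Qed.

Lemma grid_lhalf s t k j : (0 < k)%N -> grid s t (k + k) j = grid s ((s + t) / 2) k j.
Proof.
move=> k0; have hk : (k%:R : R) != 0 by rewrite pnatr_eq0 -lt0n.
by rewrite /grid natrD; field; rewrite hk /= -mulr2n mulrn_eq0 negb_or hk.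
Qed.

Lemma grid_rhalf s t k j : (0 < k)%N -> grid s t (k + k) (k + j) = grid ((s + t) / 2) t k j.
Proof.
move=> k0; have hk : (k%:R : R) != 0 by rewrite pnatr_eq0 -lt0n.
by rewrite /grid !natrD; field; rewrite hk /= -mulr2n mulrn_eq0 negb_or hk.
Qed.

Lemma path_sum_split u f s t k :
  path_sum u f s t (k + k) = path_sum u f s ((s + t) / 2) k + path_sum u f ((s + t) / 2) t k.
Proof.
case: k => [|k]; first by rewrite /path_sum !big_ord0 addr0.
rewrite /path_sum big_split_ord /=; congr (_ + _); apply: eq_bigr => i _ /=.
  by rewrite !grid_lhalf.
by rewrite -addnS !grid_rhalf.
Qed.

Lemma rect_sum_quarter u k s t a b :
  let m := (s + t) / 2 in let mu := (a + b) / 2 in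
  rect_sum u (k + k) s t a b = rect_sum u k s m a mu + rect_sum u k m t a mu
    + rect_sum u k s m mu b + rect_sum u k m t mu b.
Proof. by move=> m mu; rewrite /rect_sum !path_sum_split -/m -/mu; ring. Qed.

Lemma path_sumD u v w f s t k : (forall z, u z = v z + w z) ->
  path_sum u f s t k = path_sum v f s t k + path_sum w f s t k.
Proof.
move=> E; rewrite /path_sum -big_split; apply: eq_bigr => i _.
by rewrite /trapz !E /=; ring.
Qed.

Lemma rect_sumD u v w k s t a b : (forall z, u z = v z + w z) ->
  rect_sum u k s t a b = rect_sum v k s t a b + rect_sum w k s t a b.
Proof. by move=> E; rewrite /rect_sum !(path_sumD _ _ _ _ E); ring. Qed.

Lemma path_sum_affine (al be : C) u f s t k : (0 < k)%N -> (forall z, u z = al + be * z) ->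
  path_sum u f s t k = (al *+ 2 * f t + be * f t ^+ 2) - (al *+ 2 * f s + be * f s ^+ 2).
Proof.
move=> k0 E.
pose G j := al *+ 2 * f (grid s t k j) + be * f (grid s t k j) ^+ 2.
have -> : path_sum u f s t k = \sum_(j < k) (G j.+1 - G j).
  by apply: eq_bigr => j _; rewrite /trapz !E /G; ring.
rewrite -(big_mkord xpredT (fun j => G j.+1 - G j)) telescope_sumr //.
have hk : (k%:R : R) != 0 by rewrite pnatr_eq0 -lt0n.
by rewrite /G /grid mul0r mul0r addr0 mulrAC divff // mul1r (addrC s (t - s)) subrK.
Qed.

Lemma rect_sum_affine (al be : C) u k s t a b : (0 < k)%N -> (forall z, u z = al + be * z) ->
  rect_sum u k s t a b = 0.
Proof. by move=> k0 E; rewrite /rect_sum !(path_sum_affine _ _ _ k0 E); ring. Qed.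

Lemma grid_in s t k j : s <= t -> (j <= k)%N -> (0 < k)%N -> s <= grid s t k j <= t.
Proof.
move=> st jk k0; rewrite /grid.
have hk : (0 : R) < k%:R by rewrite ltr0n.
have hj : (j%:R : R) <= k%:R by rewrite ler_nat.
have h0 : (0 : R) <= j%:R by [].
rewrite -mulrA (mulrC _ (k%:R)^-1) mulrA.
have q0 : (0 : R) <= j%:R / k%:R by rewrite divr_ge0.
have q1 : (j%:R / k%:R : R) <= 1 by rewrite ler_pdivrMr // mul1r.
have ts : 0 <= t - s by rewrite subr_ge0.
apply/andP; split; nra.
Qed.

Lemma grid_step s t k j : (0 < k)%N -> grid s t k j.+1 - grid s t k j = (t - s) / k%:R.
Proof.
move=> k0; have hk : (k%:R : R) != 0 by rewrite pnatr_eq0 -lt0n.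
by rewrite /grid -addn1 natrD; field.
Qed.

Lemma path_sum_le w f s t k (eta : R) : s <= t -> (0 < k)%N -> 0 <= eta ->
  (forall x, s <= x <= t -> cmod (w (f x)) <= eta) ->
  (forall x y, s <= x <= t -> s <= y <= t -> cmod (f x - f y) <= 2 * `|x - y|) ->
  cmod (path_sum w f s t k) <= 4 * eta * (t - s).
Proof.
move=> st k0 e0 Hw Hf.
have hk : (0 : R) < k%:R by rewrite ltr0n.
rewrite /path_sum; apply: le_trans (cmod_sum k (fun j => trapz w (f (grid s t k j)) (f (grid s t k j.+1)))) _.
suff SB : \sum_(j < k) cmod (trapz w (f (grid s t k j)) (f (grid s t k j.+1))) <=
   \sum_(j < k) (4 * eta * (t - s) / k%:R).
  apply: le_trans SB _.
  rewrite sumr_const card_ord -[_ *+ k]mulr_natr divfK //.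
  by rewrite gt_eqF.
  apply: ler_sum => j _.
  have jk : (j <= k)%N by apply: ltnW.
  have jk1 : (j.+1 <= k)%N by [].
  have p1 := grid_in st jk k0; have p2 := grid_in st jk1 k0.
  rewrite /trapz cmodM.
  have a1 := Hw _ p1; have a2 := Hw _ p2.
  have h3 := Hf _ _ p2 p1.
  rewrite grid_step // ger0_norm ?divr_ge0 ?subr_ge0 // in h3.
  have h4 := cmodD (w (f (grid s t k j))) (w (f (grid s t k j.+1))).
  have h5 := cmod_ge0 (f (grid s t k j.+1) - f (grid s t k j)).
  have h6 := cmod_ge0 (w (f (grid s t k j)) + w (f (grid s t k j.+1))).
  have -> : 4 * eta * (t - s) / k%:R = (eta + eta) * (2 * ((t - s) / k%:R)).
    by rewrite mulrA; ring.
  apply: ler_pM => //; lra.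
Qed.

Lemma rect_sum_le w k s t a b (eta : R) : 0 <= s -> s <= t -> t <= 1 -> a <= b ->
  (0 < k)%N -> 0 <= eta ->
  (forall r th, s <= r <= t -> a <= th <= b -> cmod (w (polar r th)) <= eta) ->
  cmod (rect_sum w k s t a b) <= 8 * eta * ((t - s) + (b - a)).
Proof.
move=> s0 st t1 ab k0 e0 Hw.
have rad (th : R) : forall x y, s <= x <= t -> s <= y <= t ->
    cmod (polar x th - polar y th) <= 2 * `|x - y|.
  move=> x y _ _; rewrite polar_distR; have := normr_ge0 (x - y); lra.
have ang (r : R) : s <= r <= t -> forall x y, a <= x <= b -> a <= y <= b ->
    cmod (polar r x - polar r y) <= 2 * `|x - y|.
  move=> /andP[h1 h2] x y _ _; apply: polar_distA; rewrite ger0_norm; lra.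
have s1 : s <= s <= t by rewrite lexx st.
have t1' : s <= t <= t by rewrite lexx st.
have aa : a <= a <= b by rewrite lexx ab.
have bb : a <= b <= b by rewrite lexx ab.
have B1 := @path_sum_le w (fun r => polar r a) s t k eta st k0 e0
   (fun x hx => Hw x a hx aa) (rad a).
have B2 := @path_sum_le w (fun th => polar t th) a b k eta ab k0 e0
   (fun x hx => Hw t x t1' hx) (ang t t1').
have B3 := @path_sum_le w (fun r => polar r b) s t k eta st k0 e0
   (fun x hx => Hw x b hx bb) (rad b).
have B4 := @path_sum_le w (fun th => polar s th) a b k eta ab k0 e0
   (fun x hx => Hw s x s1 hx) (ang s s1).
rewrite /rect_sum.
set x1 := path_sum _ _ s t k in B1 *; set x2 := path_sum _ _ a b k in B2 *.
set x3 := path_sum _ _ s t k in B3 *; set x4 := path_sum _ _ a b k in B4 *.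
have := cmodD (x1 + x2 - x3) (- x4); have := cmodD (x1 + x2) (- x3);
have := cmodD x1 x2; rewrite !cmodN; lra.
Qed.

End PolarSums.

Section Goursat.
Variable R : realType.
Local Notation C := R[i].
Local Notation cmod := (@cmod R).

(* Subtract the affine approximation of [u] at [polar x y]: affine functions
   have vanishing [rect_sum], and the remainder is small times [z - p]. *)
Lemma rect_sum_le_near (u : C -> C) (x y c : R) : 0 <= x <= 1 -> 0 < c ->
  cdiff u (polar x y) -> exists2 d : R, 0 < d & forall k s t a b, (0 < k)%N ->
    0 <= s -> s <= x <= t -> t <= 1 -> a <= y <= b -> (t - s) + (b - a) < d ->
    cmod (rect_sum u k s t a b) <= c * ((t - s) + (b - a)) ^+ 2.
Proof.
move=> /andP[x0 x1] c0 [D [ED hD]]; set p := polar x y in ED hD.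
have c16 : 0 < c / 16 by rewrite divr_gt0.
have [d [d0 Hd]] := hD _ c16.
exists (d / 2) => [|k s t a b k0 s0 /andP[sx xt] t1 /andP[ay yb] szd].
  by rewrite divr_gt0.
set sz := (t - s) + (b - a) in szd *.
pose rho z := (D z - D p) * (z - p).
have Eu z : u z = (u p - D p * p + D p * z) + rho z.
  by rewrite -[u z](subrK (u p)) ED /rho; ring.
rewrite (rect_sumD _ _ _ _ _ Eu) (@rect_sum_affine _ _ _ _ _ _ _ _ _ k0 (fun _ => erefl)) add0r.
have Hr r th : s <= r <= t -> a <= th <= b -> cmod (rho (polar r th)) <= c / 16 * (2 * sz).
  move=> /andP[hr1 hr2] /andP[ht1 ht2].
  have hx1 : `|x| <= 1 by rewrite ger0_norm.
  have dd := polar_dist r th y hx1.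
  have dr : `|r - x| <= t - s by rewrite ler_norml; apply/andP; split; lra.
  have dt : `|th - y| <= b - a by rewrite ler_norml; apply/andP; split; lra.
  have zd : cmod (polar r th - p) <= 2 * sz by rewrite /sz; lra.
  have zd' : cmod (polar r th - p) < d by lra.
  have := Hd _ I zd'; rewrite /rho cmodM => h.
  by apply: ler_pM => //; [exact: cmod_ge0 | exact: cmod_ge0 | exact: ltW].
have eta0 : 0 <= c / 16 * (2 * sz) by apply: mulr_ge0; [exact: ltW | rewrite /sz; lra].
have := rect_sum_le s0 (le_trans sx xt) t1 (le_trans ay yb) k0 eta0 Hr.
by rewrite -/sz (_ : 8 * (c / 16 * (2 * sz)) * sz = c * sz ^+ 2) //; field.
Qed.

Definition rect_sum_bad (u : C -> C) (c s t a b : R) := forall N, exists2 n, (N <= n)%N &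
  c * ((t - s) + (b - a)) ^+ 2 < cmod (rect_sum u (2 ^ n) s t a b).

Lemma rect_sum_bad_quarter u c s t a b : s <= t -> a <= b -> rect_sum_bad u c s t a b ->
  let m := (s + t) / 2 in let mu := (a + b) / 2 in
  rect_sum_bad u c s m a mu \/ rect_sum_bad u c m t a mu \/
  rect_sum_bad u c s m mu b \/ rect_sum_bad u c m t mu b.
Proof.
move=> st ab Bd m mu.
have good s' t' a' b' : ~ rect_sum_bad u c s' t' a' b' -> exists N, forall n, (N <= n)%N ->
    cmod (rect_sum u (2 ^ n) s' t' a' b') <= c * ((t' - s') + (b' - a')) ^+ 2.
  move=> nb; apply: contrapT => h; apply: nb => N; apply: contrapT => h2.
  apply: h; exists N => n Nn; rewrite leNgt; apply/negP => lt.
  by apply: h2; exists n.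
apply: contrapT => /not_orP[/good[N1 H1] /not_orP[/good[N2 H2] /not_orP[/good[N3 H3] /good[N4 H4]]]].
have [[|n] Nn lt] := Bd (maxn (maxn N1 N2) (maxn N3 N4)).+1; first by [].
move: Nn; rewrite ltnS !geq_max => /andP[/andP[/H1 b1 /H2 b2] /andP[/H3 b3 /H4 b4]].
move: lt; rewrite expnS mul2n -addnn rect_sum_quarter -/m -/mu.
set sz := (t - s) + (b - a).
have sz2 v : v = sz / 2 -> c * v ^+ 2 = c * sz ^+ 2 / 4 by move->; field.
rewrite (sz2 _ (_ : m - s + (mu - a) = sz / 2)) in b1; last by rewrite /m /mu /sz; field.
rewrite (sz2 _ (_ : t - m + (mu - a) = sz / 2)) in b2; last by rewrite /m /mu /sz; field.
rewrite (sz2 _ (_ : m - s + (b - mu) = sz / 2)) in b3; last by rewrite /m /mu /sz; field.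
rewrite (sz2 _ (_ : t - m + (b - mu) = sz / 2)) in b4; last by rewrite /m /mu /sz; field.
set X1 := rect_sum _ _ s m a mu in b1 *; set X2 := rect_sum _ _ m t a mu in b2 *.
set X3 := rect_sum _ _ s m mu b in b3 *; set X4 := rect_sum _ _ m t mu b in b4 *.
have := cmodD (X1 + X2 + X3) X4; have := cmodD (X1 + X2) X3; have := cmodD X1 X2.
lra.
Qed.

(* A counterexample would persist in nested quarters shrinking to a point
   where [u] is differentiable, contradicting [rect_sum_le_near]. *)
Lemma goursat (u : C -> C) (r1 r2 a b : R) : 0 <= r1 -> r1 <= r2 -> r2 <= 1 -> a <= b ->
  (forall r th, r1 <= r <= r2 -> a <= th <= b -> cdiff u (polar r th)) ->
  forall c : R, 0 < c -> exists N, forall n, (N <= n)%N ->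
    cmod (rect_sum u (2 ^ n) r1 r2 a b) <= c * ((r2 - r1) + (b - a)) ^+ 2.
Proof.
move=> r10 r12 r21 ab Hu c c0; apply: contrapT => nG.
have B0 : rect_sum_bad u c r1 r2 a b.
  move=> N; apply: contrapT => h; apply: nG; exists N => n Nn.
  by rewrite leNgt; apply/negP => lt; apply: h; exists n.
have [x [y [/andP[x1 x2] [/andP[y1 y2] Hsm]]]] :=
  quadrisection (@rect_sum_bad_quarter u c) r12 ab B0.
have x01 : 0 <= x <= 1 by apply/andP; split; lra.
have [d d0 Hd] := rect_sum_le_near x01 c0
  (Hu x y (introT andP (conj x1 x2)) (introT andP (conj y1 y2))).
have [s [t [a' [b' [Bd [s1 [sx [xt [t2 [a1 [ay [yb [b2 szd]]]]]]]]]]]]] := Hsm _ d0.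
have [n _ lt] := Bd 0%N.
have := Hd (2 ^ n)%N s t a' b' (expn_gt0 _ _) ltac:(lra).
rewrite sx xt ay yb => /(_ isT ltac:(lra) isT szd); lra.
Qed.

End Goursat.

Section CircleAverages.
Variable R : realType.
Local Notation C := R[i].
Local Notation cmod := (@cmod R).
Local Notation tpi := ((pi : R) *+ 2).

Definition circle_sum (h : C -> C) (k : nat) (r : R) :=
  \sum_(j < k) h (polar r (grid 0 tpi k j)).

Lemma polar2pi r : polar r tpi = polar r 0.
Proof. by rewrite /polar expi2pi expi0. Qed.

Lemma path_sum_circle (h : C -> C) (k : nat) (r : R) : 0 < r -> (0 < k)%N ->
  path_sum (fun z => h z / z) (fun th => polar r th) 0 tpi k =
  (expi (tpi / k%:R) - (expi (tpi / k%:R))^-1) * circle_sum h k r.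
Proof.
move=> r0 k0; set om := expi _.
have hk : (k%:R : R) != 0 by rewrite pnatr_eq0 -lt0n.
have om0 : om != 0 by exact: expi_neq0.
pose a j := polar r (grid 0 tpi k j).
have a0 j : a j != 0 by rewrite -cmod_eq0 cmod_polar gt_eqF // normr_gt0 gt_eqF.
have aS j : a j.+1 = a j * om.
  rewrite /a /polar -mulrA -expiD; congr (_ * expi _).
  by rewrite /grid -addn1 natrD; field.
pose F j := h (a j).
have shift : \sum_(j < k) F j.+1 = \sum_(j < k) F j.
  have e1 : \sum_(i < k.+1) F i = F 0%N + \sum_(i < k) F i.+1.
    by rewrite big_ord_recl; congr (_ + _); apply: eq_bigr => i _; rewrite lift0.
  have e2 : \sum_(i < k.+1) F i = \sum_(i < k) F i + F k by rewrite big_ord_recr.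
  have Fk : F k = F 0%N.
    have pk : grid 0 tpi k k = (pi : R) *+ 2.
      by rewrite /grid subr0 mulrAC divff // mul1r add0r.
    have p0 : grid 0 tpi k 0 = 0 by rewrite /grid !mul0r addr0.
    by rewrite /F /a pk p0 polar2pi.
  rewrite Fk e1 addrC in e2; exact: (addIr _ e2).
rewrite /path_sum /circle_sum.
have -> : \sum_(j < k) trapz (fun z => h z / z) (polar r (grid 0 tpi k j))
   (polar r (grid 0 tpi k j.+1)) =
   \sum_(j < k) (F j * (om - 1) + F j.+1 * (1 - om^-1)).
  apply: eq_bigr => j _; rewrite /trapz -/(a j) -/(a j.+1) aS /F aS.
  by field; rewrite a0 om0.
rewrite big_split /= -!mulr_suml shift -/(F _).
have -> : \sum_(j < k) h (polar r (grid 0 tpi k j)) = \sum_(j < k) F j by [].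
by ring.
Qed.


(* The radial sides cancel since [polar r tpi = polar r 0], and on each circle
   the trapezoid sum of [h z / z dz] collapses to a multiple of [circle_sum]. *)
Lemma rect_sum_annulus (h : C -> C) k r1 r2 : 0 < r1 -> 0 < r2 -> (0 < k)%N ->
  rect_sum (fun z => h z / z) k r1 r2 0 tpi =
  (expi (tpi / k%:R) - (expi (tpi / k%:R))^-1) * (circle_sum h k r2 - circle_sum h k r1).
Proof.
move=> r10 r20 k0; rewrite /rect_sum.
have -> : path_sum (fun z => h z / z) (fun r => polar r tpi) r1 r2 k =
          path_sum (fun z => h z / z) (fun r => polar r 0) r1 r2 k.
  by apply: eq_bigr => j _; rewrite !polar2pi.
rewrite !path_sum_circle //; ring.
Qed.

Lemma cmod_avg_le (F : nat -> C) (c : C) (k : nat) (B : R) : (0 < k)%N ->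
  (forall j, (j < k)%N -> cmod (F j - c) <= B) ->
  cmod ((\sum_(j < k) F j) / k%:R - c) <= B.
Proof.
move=> k0 HF.
have hk : (k%:R : C) != 0 by rewrite pnatr_eq0 -lt0n.
have hkR : (0 : R) < k%:R by rewrite ltr0n.
have -> : (\sum_(j < k) F j) / k%:R - c = (\sum_(j < k) (F j - c)) / k%:R.
  by rewrite sumrB sumr_const card_ord -mulr_natr; field.
rewrite cmodM cmodV cmod_natr ler_pdivrMr //.
apply: le_trans (cmod_sum k (fun j => F j - c)) _.
have : \sum_(j < k) cmod (F j - c) <= \sum_(j < k) B by apply: ler_sum => j _; apply: HF.
by rewrite sumr_const card_ord -[_ *+ k]mulr_natr.
Qed.

(* [expi x - (expi x)^-1] is [2 i sin x], and [sin x >= x cos 1] for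
   [x = tpi / k <= 1]. *)
Lemma circle_avg_diff_le (h : C -> C) k r1 r2 : (8 <= k)%N -> 0 < r1 -> 0 < r2 ->
  4 * pi * cos 1 * cmod (circle_sum h k r2 / k%:R - circle_sum h k r1 / k%:R)
    <= cmod (rect_sum (fun z => h z / z) k r1 r2 0 tpi).
Proof.
move=> k8 r10 r20; have k0 : (0 < k)%N by apply: leq_trans k8.
have kR : (8 : R) <= k%:R by rewrite (ler_nat R 8 k).
have pi4 : (pi : R) < 4 by have := @pihalf_lt2 R; lra.
have hx : 0 < tpi / k%:R <= 1.
  apply/andP; split; first by rewrite divr_gt0 ?ltr0n // mulrn_wgt0 // pi_gt0.
  by rewrite ler_pdivrMr ?ltr0n // mul1r; lra.
rewrite rect_sum_annulus // cmodM -mulrBl cmodM cmodV cmod_natr.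
have X0 := cmod_ge0 (circle_sum h k r2 - circle_sum h k r1).
apply: le_trans (ler_wpM2r X0 (cmod_expiBV hx)); rewrite le_eqVlt; apply/orP; left.
by apply/eqP; rewrite mulr2n; field; rewrite pnatr_eq0 -lt0n.
Qed.

Lemma circle_avg_close (h : C -> C) (r1 r2 e : R) :
  (forall z, cmod z < 1 -> cdiff h z) -> 0 < r1 -> r1 <= r2 -> r2 < 1 -> 0 < e ->
  exists n, cmod (circle_sum h (2 ^ n) r2 / (2 ^ n)%:R - circle_sum h (2 ^ n) r1 / (2 ^ n)%:R) <= e.
Proof.
move=> Hd r10 r12 r21 e0.
have pi0 : (0 : R) < pi := pi_gt0 R.
have K0 : 0 < 4 * pi * cos 1 :> R by rewrite !mulr_gt0 // cos1_gt0.
set sz := (r2 - r1) + (tpi - 0).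
have sz0 : 0 < sz by rewrite /sz; lra.
have Hu r th : r1 <= r <= r2 -> 0 <= th <= tpi -> cdiff (fun z => h z / z) (polar r th).
  move=> /andP[h1 h2] _; have hr : 0 < r by lra.
  apply: cdiffM; first by apply: Hd; rewrite cmod_polar gtr0_norm //; lra.
  by apply: cdiffV; rewrite -cmod_eq0 cmod_polar gtr0_norm // gt_eqF.
have c0 : 0 < e * (4 * pi * cos 1) / sz ^+ 2.
  by apply: divr_gt0; [exact: mulr_gt0 | exact: exprn_gt0].
have [N HN] := goursat (ltW r10) r12 (ltW r21) (ltW (mulrn_wgt0 2 pi0)) Hu c0.
have k8 : (8 <= 2 ^ maxn N 3)%N by rewrite -[8%N]/(2 ^ 3)%N leq_pexp2l // leq_maxr.
exists (maxn N 3); rewrite -(ler_pM2l K0).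
apply: le_trans (circle_avg_diff_le h k8 r10 (lt_le_trans r10 r12)) _.
apply: le_trans (HN _ (leq_maxl _ _)) _.
by rewrite -/sz le_eqVlt; apply/orP; left; apply/eqP; field; rewrite gt_eqF.
Qed.

End CircleAverages.

Section MaximumModulus.
Variable R : realType.
Local Notation C := R[i].
Local Notation cmod := (@cmod R).
Local Notation tpi := ((pi : R) *+ 2).

Definition exceeds_near_circle (h : C -> C) (K s t a b : R) :=
  forall rho, rho < 1 -> exists r th,
    [/\ s <= r <= t, a <= th <= b, rho <= r <= 1 & K < cmod (h (polar r th))].

Lemma exceeds_near_circle_quarter h K s t a b : s <= t -> a <= b ->
  exceeds_near_circle h K s t a b ->
  let m := (s + t) / 2 in let mu := (a + b) / 2 in
  exceeds_near_circle h K s m a mu \/ exceeds_near_circle h K m t a mu \/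
  exceeds_near_circle h K s m mu b \/ exceeds_near_circle h K m t mu b.
Proof.
move=> st ab Ps m mu.
have far s' t' a' b' : ~ exceeds_near_circle h K s' t' a' b' ->
    exists2 rho, rho < 1 & forall r th, s' <= r -> r <= t' -> a' <= th -> th <= b' ->
      rho <= r -> r <= 1 -> cmod (h (polar r th)) <= K.
  move=> nP; apply: contrapT => nf; apply: nP => rho rho1; apply: contrapT => nex.
  apply: nf; exists rho => // r th h1 h2 h3 h4 h5 h6; rewrite leNgt; apply/negP => hK.
  by apply: nex; exists r, th; rewrite h1 h2 h3 h4 h5 h6.
apply: contrapT => /not_orP[/far[p1 q1 H1] /not_orP[/far[p2 q2 H2]
  /not_orP[/far[p3 q3 H3] /far[p4 q4 H4]]]].
pose rho := Num.max (Num.max p1 p2) (Num.max p3 p4).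
have rho1 : rho < 1 by rewrite !gt_max q1 q2 q3 q4.
have [r [th [/andP[h1 h2] /andP[h3 h4] /andP[h5 h6] h7]]] := Ps rho rho1.
have l1 : p1 <= r by apply: le_trans h5; rewrite !le_max lexx.
have l2 : p2 <= r by apply: le_trans h5; rewrite !le_max lexx !orbT.
have l3 : p3 <= r by apply: le_trans h5; rewrite !le_max lexx !orbT.
have l4 : p4 <= r by apply: le_trans h5; rewrite !le_max lexx !orbT.
have [hr|hr] := leP r m; have [ht|ht] := leP th mu.
- by have := H1 r th h1 hr h3 ht l1 h6; lra.
- by have := H3 r th h1 hr (ltW ht) h4 l3 h6; lra.
- by have := H2 r th (ltW hr) h2 h3 ht l2 h6; lra.
- by have := H4 r th (ltW hr) h2 (ltW ht) h4 l4 h6; lra.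
Qed.

(* Uniform version of the continuity of [h] at the points of the unit circle,
   obtained by quadrisection of [0, 1] x [0, 2 pi]. *)
Lemma bound_near_circle (h : C -> C) (M e : R) : 0 < e ->
  (forall w, cmod w = 1 -> cont_within (fun z => cmod z <= 1) h w) ->
  (forall w, cmod w = 1 -> cmod (h w) <= M) ->
  exists2 rho, rho < 1 & forall r th, rho <= r <= 1 -> 0 <= th <= tpi ->
    cmod (h (polar r th)) <= M + e.
Proof.
move=> e0 Hb HM; apply: contrapT => nG.
have P0 : exceeds_near_circle h (M + e) 0 1 0 tpi.
  move=> rho rho1; apply: contrapT => nex; apply: nG.
  exists (Num.max rho (1 / 2)) => [|r th /andP[hr r1] hth]; first by rewrite gt_max rho1; lra.
  rewrite leNgt; apply/negP => hK; apply: nex; exists r, th.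
  by move: hr; rewrite ge_max => /andP[? ?]; split => //; apply/andP; split => //; lra.
have ab0 : (0 : R) <= tpi by rewrite mulrn_wge0 // ltW // pi_gt0.
have [x [y [/andP[_ x1] [_ Hsm]]]] :=
  quadrisection (@exceeds_near_circle_quarter h (M + e)) ler01 ab0 P0.
have {x1}x1 : x = 1.
  apply: contrapT => /eqP xn1; have d0 : 0 < (1 - x) / 2 by rewrite divr_gt0 // subr_gt0 lt_neqAle xn1.
  have [s [t [a [b [PQ [_ [sx [_ [_ [_ [ay [yb [_ szd]]]]]]]]]]]]] := Hsm _ d0.
  have t1 : (1 + t) / 2 < 1 by lra.
  by have [r [th [/andP[_ rt] _ /andP[r1 _] _]]] := PQ _ t1; lra.
set p := polar 1 y.
have np : cmod p = 1 by rewrite /p cmod_polar normr1.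
have [d [d0 Hd]] := Hb p np e e0.
have d2 : 0 < d / 2 by rewrite divr_gt0.
have [s [t [a [b [PQ [s0 [sx [xt [_ [_ [ay [yb [_ szd]]]]]]]]]]]]] := Hsm _ d2.
have [r [th [/andP[sr rt] /andP[ath thb] /andP[r0 r1] hK]]] := PQ 0 ltr01.
have nz : cmod (polar r th) <= 1 by rewrite cmod_polar ger0_norm.
have dd : cmod (polar r th - p) <= `|r - 1| + 2 * `|th - y|.
  by apply: polar_dist; rewrite normr1.
have dr : `|r - 1| <= t - s by rewrite ler_norml; apply/andP; split; lra.
have dt : `|th - y| <= b - a by rewrite ler_norml; apply/andP; split; lra.
have zd : cmod (polar r th - p) < d by rewrite /p; lra.
have := Hd _ nz zd; have := HM _ np.
by have := cmodD (h p) (h (polar r th) - h p); rewrite addrC subrK; lra.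
Qed.

(* [h 0] is close to its averages on small circles, which by
   [circle_avg_close] are close to the averages on circles near the boundary. *)
Lemma max_modulus0 (h : C -> C) (M : R) :
  (forall z, cmod z < 1 -> cdiff h z) ->
  (forall w, cmod w = 1 -> cont_within (fun z => cmod z <= 1) h w) ->
  (forall w, cmod w = 1 -> cmod (h w) <= M) ->
  cmod (h 0) <= M.
Proof.
move=> Hd Hb HM; apply/ler_addgt0Pr => e' e'0.
pose e := e' / 3; have e0 : 0 < e by rewrite divr_gt0.
have [rho rho1 Hr] := bound_near_circle e0 Hb HM.
have c0 : cont_within setT h 0 by apply: cdiff_cont; apply: Hd; rewrite cmod0.
have [d [d0 Hd0]] := c0 _ e0.
pose r1 := Num.min (d / 2) (1 / 2).
have r10 : 0 < r1 by rewrite lt_min !divr_gt0.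
have r1d : r1 < d by rewrite /r1 gt_min; apply/orP; left; lra.
have r11 : r1 < 1 by rewrite /r1 gt_min; apply/orP; right; lra.
pose r2 := Num.max rho r1.
have r12 : r1 <= r2 by rewrite le_max lexx orbT.
have r21 : r2 < 1 by rewrite gt_max rho1 r11.
have rr2 : rho <= r2 by rewrite le_max lexx.
have [n Hn] := circle_avg_close Hd r10 r12 r21 e0.
set k := (2 ^ n)%N in Hn.
have k0 : (0 < k)%N by rewrite expn_gt0.
have A1 : cmod (circle_sum h k r1 / k%:R - h 0) <= e.
  rewrite /circle_sum; apply: (cmod_avg_le (F := fun j => h (polar r1 (grid 0 tpi k j)))) => // j jk.
  apply: ltW; apply: Hd0 => //.
  by rewrite subr0 cmod_polar gtr0_norm.
have A2 : cmod (circle_sum h k r2 / k%:R - 0) <= M + e.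
  rewrite /circle_sum; apply: (cmod_avg_le (F := fun j => h (polar r2 (grid 0 tpi k j)))) => // j jk.
  have ab0 : (0 : R) <= tpi by rewrite mulrn_wge0 // ltW // (@pi_gt0 R).
  have := grid_in (s := 0) (t := tpi) ab0 (ltnW jk) k0.
  rewrite subr0 => hth; apply: Hr => //; apply/andP; split => //; lra.
rewrite subr0 in A2.
set X1 := circle_sum h k r1 / k%:R in A1 Hn; set X2 := circle_sum h k r2 / k%:R in A2 Hn.
have -> : h 0 = - (X1 - h 0) + ((X1 - X2) + X2) by ring.
have := cmodD (- (X1 - h 0)) ((X1 - X2) + X2); have := cmodD (X1 - X2) X2.
rewrite cmodN cmod_distC; rewrite /e in A1 A2 Hn; lra.
Qed.

End MaximumModulus.

Section Mobius.
Variable R : realType.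
Local Notation C := R[i].
Local Notation cmod := (@cmod R).

Lemma mobius_identity (a w : C) :
  cmod (1 + conjc a * w) ^+ 2 - cmod (w + a) ^+ 2 = (1 - cmod a ^+ 2) * (1 - cmod w ^+ 2).
Proof. rewrite !sqr_cmod; case: a => a1 a2; case: w => w1 w2 /=; ring. Qed.

Definition mobius (a w : C) := (w + a) * (1 + conjc a * w)^-1.

Lemma mobius_den_gt0 (a w : C) : cmod a < 1 -> cmod w <= 1 -> 0 < cmod (1 + conjc a * w).
Proof.
move=> a1 w1; have := cmod_lerB_dist 1 (- (conjc a * w)); rewrite opprK cmod1 cmodN cmodM cmod_conj.
have := cmod_ge0 a; have := cmod_ge0 w; nra.
Qed.

Lemma cmod_mobius_le1 (a w : C) : cmod a < 1 -> cmod w <= 1 -> cmod (mobius a w) <= 1.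
Proof.
move=> a1 w1; have d0 := mobius_den_gt0 a1 w1; have E := mobius_identity a w.
have a0 := cmod_ge0 a; have w0 := cmod_ge0 w; have x0 := cmod_ge0 (w + a).
rewrite /mobius cmodM cmodV ler_pdivrMr // mul1r.
have : 0 <= (1 - cmod a ^+ 2) * (1 - cmod w ^+ 2) by apply: mulr_ge0; nra.
nra.
Qed.

Lemma cmod_mobius_lt1 (a w : C) : cmod a < 1 -> cmod w < 1 -> cmod (mobius a w) < 1.
Proof.
move=> a1 w1; have d0 := mobius_den_gt0 a1 (ltW w1); have E := mobius_identity a w.
have a0 := cmod_ge0 a; have w0 := cmod_ge0 w; have x0 := cmod_ge0 (w + a).
rewrite /mobius cmodM cmodV ltr_pdivrMr // mul1r.
have : 0 < (1 - cmod a ^+ 2) * (1 - cmod w ^+ 2) by apply: mulr_gt0; nra.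
nra.
Qed.

Lemma cmod_mobius_eq1 (a w : C) : cmod a < 1 -> cmod w = 1 -> cmod (mobius a w) = 1.
Proof.
move=> a1 w1; have d0 : 0 < cmod (1 + conjc a * w) by apply: mobius_den_gt0; rewrite ?w1.
have := mobius_identity a w; rewrite w1 expr1n subrr mulr0 => E.
have XY : cmod (w + a) = cmod (1 + conjc a * w).
  apply/eqP; rewrite -(@eqrXn2 _ 2) ?cmod_ge0 //.
  by rewrite eq_sym -subr_eq0 E.
by rewrite /mobius cmodM cmodV XY divff // gt_eqF.
Qed.

Lemma cdiff_mobius (a w : C) : cmod a < 1 -> cmod w <= 1 -> cdiff (mobius a) w.
Proof.
move=> a1 w1; have d0 := mobius_den_gt0 a1 w1.
rewrite /mobius; apply: (@cdiffM _ (fun z => z + a) (fun z => (1 + conjc a * z)^-1)).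
  exact: (cdiffD (cdiff_id w) (cdiff_cst a w)).
apply: (@cdiff_comp _ (fun z => z^-1) (fun z => 1 + conjc a * z)).
  by apply: cdiffV; rewrite -cmod_eq0 gt_eqF.
apply: (cdiffD (cdiff_cst 1 w)); exact: (cdiffM (cdiff_cst _ w) (cdiff_id w)).
Qed.

Lemma max_modulus (h : C -> C) (M : R) (a : C) : cmod a < 1 ->
  (forall z, cmod z < 1 -> cdiff h z) ->
  (forall w, cmod w = 1 -> cont_within (fun z => cmod z <= 1) h w) ->
  (forall w, cmod w = 1 -> cmod (h w) <= M) ->
  cmod (h a) <= M.
Proof.
move=> a1 Hd Hb HM.
have -> : h a = (fun w => h (mobius a w)) 0 by rewrite /mobius add0r mulr0 addr0 invr1 mulr1.
apply: (@max_modulus0 _ (fun w => h (mobius a w)) M).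
- move=> z z1; apply: (@cdiff_comp _ h (mobius a)).
    exact/Hd/cmod_mobius_lt1.
  exact: cdiff_mobius (ltW z1).
- move=> w w1; apply: (cont_within_comp (B := fun z => cmod z <= 1)).
  + exact/Hb/cmod_mobius_eq1.
  + by apply/cdiff_cont/cdiff_mobius; rewrite ?w1.
  + by move=> z; exact: cmod_mobius_le1.
- by move=> w w1; apply/HM/cmod_mobius_eq1.
Qed.

End Mobius.

Section LibraryNotions.
Variable R : realType.
Local Notation C := R[i].
Local Notation cmod := (@cmod R).

Lemma continuous_on_cont_within (A : set C) (f : C -> C) (x : C) :
  continuous_on A f -> A x -> cont_within A f x.
Proof.
move=> /subspace_continuousP H Ax e e0.
have eC : (0 : C) < e%:C by rewrite ltcR.
have /cvgrPdist_lt/(_ _ eC) /nbhs_ballP[d /= d0 Hd] := H x Ax.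
move: d0; rewrite ltcE /= => /andP[/eqP dIm dRe].
have dE : d = (complex.Re d)%:C by case: d dIm {Hd dRe} => a b /= ->.
exists (complex.Re d); split => // z Az zx.
have := Hd z _ Az; rewrite /from_subspace normc_ltR cmod_distC; apply.
by rewrite /ball /= dE normc_ltR cmod_distC.
Qed.

Lemma derivable_cdiff (f : C -> C) (a : C) :
  derivable (f : R[i]^o -> R[i]^o) (a : R[i]^o) 1 -> cdiff f a.
Proof.
move=> /cvg_ex [l /= /cvgrPdist_lt Hl].
exists (fun z => if z == a then l else (f z - f a) / (z - a)); split.
  move=> z; case: eqP => [->|/eqP za]; first by rewrite !subrr mulr0.
  by rewrite divfK // subr_eq0.
move=> e e0; have eC : (0 : C) < e%:C by rewrite ltcR.
have := Hl _ eC; rewrite /within /= => /nbhs_ballP [d /= d0 Hd].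
move: d0; rewrite ltcE /= => /andP[/eqP dIm dRe].
have dE : d = (complex.Re d)%:C by case: d dIm {Hd dRe} => u v /= ->.
exists (complex.Re d); split => // z _ za; rewrite eqxx.
case: ifP => [_|/negbT zna]; first by rewrite subrr cmod0.
have hb : ball (0 : R[i]^o) d (z - a) by rewrite /ball /= dE normc_ltR sub0r cmodN.
have := Hd (z - a) hb; rewrite subr_eq0 => /(_ zna).
rewrite -[((z - a)%:A : R[i]^o)]/((z - a) * 1 : R[i]) mulr1 subrK.
rewrite -[((z - a)^-1 *: _ : R[i]^o)]/((z - a)^-1 * (f z - f a) : R[i]).
by rewrite normc_ltR cmod_distC mulrC.
Qed.

End LibraryNotions.

Section WeightedPolynomial.
Variable R : realType.
Local Notation C := R[i].
Local Notation cmod := (@cmod R).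

Definition poly2 (d : nat) (c : nat -> nat -> C) (x y : C) :=
  \sum_(i < d.+1) \sum_(j < d.+1) (if (i + j <= d)%N then c i j * x ^+ i * y ^+ j else 0).

Lemma poly2_evalE d c p : poly2_eval d c p = poly2 d c p.1 p.2.
Proof. by apply: eq_bigr => i _; rewrite big_mkcond. Qed.

Lemma cont_within_poly2 A d c (f : C -> C) w :
  cont_within A f w -> cont_within A (fun z => poly2 d c z (f z)) w.
Proof.
move=> hf; apply: (@cont_within_sum _ A d.+1 (fun i z => \sum_(j < d.+1)
   (if (i + j <= d)%N then c i j * z ^+ i * f z ^+ j else 0))) => i.
apply: (@cont_within_sum _ A d.+1 (fun j z =>
   (if (i + j <= d)%N then c i j * z ^+ i * f z ^+ j else 0))) => j.
case: (i + j <= d)%N; last exact: cont_within_cst.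
apply: cont_withinM; last exact: cont_withinX.
by apply: cont_withinM; [exact: cont_within_cst | exact/cont_withinX/cont_within_id].
Qed.

(* [z ^+ (m * d) * poly2 d c z (g z / z ^+ m)] with the powers of [z] cleared,
   so that it makes sense across [z = 0]. *)
Definition poly2_cleared (d m : nat) (c : nat -> nat -> C) (g : C -> C) (z : C) :=
  \sum_(i < d.+1) \sum_(j < d.+1)
     (if (i + j <= d)%N then c i j * z ^+ (i + m * (d - j)) * g z ^+ j else 0).

Lemma cdiff_poly2_cleared d m c g z : cdiff g z -> cdiff (poly2_cleared d m c g) z.
Proof.
move=> hg; apply: (@cdiff_sum _ d.+1 (fun i z => \sum_(j < d.+1)
   (if (i + j <= d)%N then c i j * z ^+ (i + m * (d - j)) * g z ^+ j else 0))) => i.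
apply: (@cdiff_sum _ d.+1 (fun j z =>
   (if (i + j <= d)%N then c i j * z ^+ (i + m * (d - j)) * g z ^+ j else 0))) => j.
case: (i + j <= d)%N; last exact: cdiff_cst.
apply: cdiffM; last exact: cdiffX.
by apply: cdiffM; [exact: cdiff_cst | exact/cdiffX/cdiff_id].
Qed.

Lemma poly2_clearedE d m c g z : z != 0 ->
  poly2_cleared d m c g z = z ^+ (m * d) * poly2 d c z (g z / z ^+ m).
Proof.
move=> z0; rewrite mulr_sumr; apply: eq_bigr => i _.
rewrite mulr_sumr; apply: eq_bigr => j _.
case: ifP => h; last by rewrite mulr0.
have jd : (j <= d)%N by apply: leq_trans h; apply: leq_addl.
have -> : (m * d = m * (d - j) + m * j)%N by rewrite -mulnDr subnK.
rewrite !exprD !exprM expr_div_n.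
have nz : z ^+ m ^+ j != 0 by rewrite !expf_neq0.
by field.
Qed.

(* The function that is [poly2_cleared] inside the disc and
   [z ^+ (m * d) * poly2 d c z (phi z)] on the circle is holomorphic inside and
   continuous up to the circle, so the maximum modulus principle applies. *)
Lemma poly2_pole_bound (phi g : C -> C) (m d : nat) (c : nat -> nat -> C) (M : R) (z0 : C) :
  continuous_on [set z : C | 0 < `|z| <= 1] phi ->
  (forall z, cmod z < 1 -> cdiff g z) ->
  (forall z, 0 < cmod z < 1 -> phi z = g z / z ^+ m) ->
  (forall w, cmod w = 1 -> cmod (poly2 d c w (phi w)) <= M) ->
  0 < cmod z0 < 1 -> cmod z0 ^+ (m * d) * cmod (poly2 d c z0 (phi z0)) <= M.
Proof.
move=> phi_cont g_diff phiE HM /andP[z0p z0l].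
pose Q z := z ^+ (m * d) * poly2 d c z (phi z).
pose H z := if cmod z < 1 then poly2_cleared d m c g z else Q z.
have HQ z : 0 < cmod z -> cmod z < 1 -> H z = Q z.
  move=> zp z1; rewrite /H z1 poly2_clearedE -?cmod_eq0 ?gt_eqF // /Q phiE //.
  by rewrite zp.
have HQ1 w : cmod w = 1 -> H w = Q w by move=> w1; rewrite /H w1 ltxx.
rewrite -cmodX -cmodM -/(Q z0) -HQ //.
apply: (max_modulus z0l) => [z z1 | w w1 | w w1].
- apply: (@cdiff_eq_near _ (poly2_cleared d m c g)); last exact/cdiff_poly2_cleared/g_diff.
  exists (1 - cmod z); first by rewrite subr_gt0.
  move=> v vz; rewrite /H ifT //.
  by have := cmod_distD v z 0; rewrite !subr0; lra.
- have cQ : cont_within [set z | 0 < `|z| <= 1] Q w.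
    apply: cont_withinM; first exact/cont_withinX/cont_within_id.
    apply/cont_within_poly2/continuous_on_cont_within => //=.
    by rewrite normc_gt0 normc_le1 w1 ltr01 lexx.
  move=> e /cQ[dl [dl0 Hdl]].
  exists (Num.min dl (1 / 2)); split; first by rewrite lt_min dl0 divr_gt0.
  move=> z z1; rewrite lt_min => /andP[zd zh].
  have zp : 0 < cmod z by have := cmod_distD w z 0; rewrite !subr0 w1 cmod_distC; lra.
  have Hz : H z = Q z.
    by have [zl|zl] := ltP (cmod z) 1; [exact: HQ | rewrite /H ltNge zl].
  rewrite (HQ1 w) // Hz; apply: Hdl => //=.
  by rewrite normc_gt0 normc_le1 zp z1.
- by rewrite HQ1 // cmodM cmodX w1 expr1n mul1r; exact: HM.
Qed.

End WeightedPolynomial.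

Local Close Scope complex_scope.

Theorem proposition3 (R : realType) (phi : R[i] -> R[i]) :
  continuous_on [set z : R[i] | 0 < `|z| <= 1] phi ->
  holomorphic_on [set z | 0 < `|z| < 1] phi ->
  pole_or_removable_at0 phi ->
  [set (z, phi z) | z in [set z : R[i] | 0 < `|z| <= 1]]
    `<=` projective_hull [set (z, phi z) | z in [set z : R[i] | `|z| = 1]].
Proof.
move=> phi_cont _ [m [g [g_hol phiE]]] _ [z0 /andP[z0p z01] <-].
rewrite normc_gt0 in z0p; rewrite normc_le1 in z01.
have [z0l|z0ge] := ltP (cmod z0) 1; last first.
  exists 1 => d c M HM; rewrite expr1n mul1r; apply: HM.
  by exists z0 => //; apply/normc_eq1; apply/eqP; rewrite eq_le z01 z0ge.
exists ((cmod z0)^-1 ^+ m) => d c M HM.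
rewrite poly2_evalE normc_leR /= -exprM exprVn ler_pdivlMl ?exprn_gt0 //.
apply: (poly2_pole_bound phi_cont) => [z z1 | z /andP[zp z1] | w w1 |]; last by rewrite z0p.
- by apply/derivable_cdiff/g_hol; rewrite /= normc_lt1.
- by apply: phiE; rewrite normc_gt0 normc_lt1 zp.
- have := HM (w, phi w); rewrite poly2_evalE /= normc_leR; apply.
  by exists w => //; apply/normc_eq1.
Qed.
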